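(* Consider the cone percolation process on $\mathbb{T}_d$ ($d\ge2$) with $\mathbb{P}(R=k)=(1-p)p^k$, $k=0,1,2,\dots$, where $p\in(0,1)$. If $dp^2-2dp+1<0$ then $\mathbb{P}[V]>0$; if $2pd\le 1$ then $\mathbb{P}[V]=0$.
   Context: Let $d\ge 2$ and let $\mathbb{T}_d$ be the infinite tree in which every vertex has exactly $d+1$ neighbours. Fix a vertex $\mathcal{O}$ (the origin); $d(u,v)$ denotes graph distance. Write $u\le v$ if $u$ lies on the path from $\mathcal{O}$ to $v$ (so $\mathcal{O}\le v$ for all $v$). Let $R$ be a random variable with values in $\{0,1,2,\dots\}$. Cone percolation on $\mathbb{T}_d$: to each vertex $u$ attach an independent copy $R_u$ of $R$; let $B_u=\{v: u\le v,\ d(u,v)\le R_u\}$; set $I_0=\{\mathcal{O}\}$, $I_{n+1}=\bigcup_{u\in I_n}B_u$, $I=\bigcup_{n\ge0}I_n$, and let $V=\{|I|=\infty\}$; $\mathbb{P}$ is the probability measure of this process. *)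

From Stdlib Require Import Reals List Arith.
Import ListNotations.
Open Scope R_scope.

Record ProbSpace := {
  Omega : Type;
  meas : (Omega -> Prop) -> Prop;
  Pr : (Omega -> Prop) -> R;
  meas_full : meas (fun _ => True);
  meas_compl : forall A, meas A -> meas (fun w => ~ A w);
  meas_cunion : forall A : nat -> Omega -> Prop,
      (forall n, meas (A n)) -> meas (fun w => exists n, A n w);
  Pr_nonneg : forall A, meas A -> 0 <= Pr A;
  Pr_full : Pr (fun _ => True) = 1;
  Pr_ext : forall A B, (forall w, A w <-> B w) -> Pr A = Pr B;
  Pr_sigma_additive : forall A : nat -> Omega -> Prop,
      (forall n, meas (A n)) ->
      (forall i j w, i <> j -> A i w -> A j w -> False) ->
      Un_cv (fun n => sum_f_R0 (fun i => Pr (A i)) n)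
            (Pr (fun w => exists n, A n w))
}.

(** A vertex is encoded by the list of child indices on the path from the
    origin, in leaf-to-root order (the head is the last step).  The origin
    is [[]]; the origin has d+1 children (indices 0..d), every other vertex
    has d children (indices 0..d-1), so every vertex has degree d+1. *)
Fixpoint valid (d : nat) (v : list nat) : Prop :=
  match v with
  | [] => True
  | i :: w => valid d w /\ (i < (match w with [] => S d | _ => d end))%nat
  end.

Definition tle (u v : list nat) : Prop := exists w, v = w ++ u.

(** graph distance between u and v when u <= v *)
Definition tdist (u v : list nat) : nat := (length v - length u)%nat.

Definition cone (d : nat) (r : nat) (u v : list nat) : Prop :=
  valid d v /\ tle u v /\ (tdist u v <= r)%nat.

Section Cone.
Variable d : nat.
Variable Om : Type.
Variable Rad : list nat -> Om -> nat.

Fixpoint In_set (n : nat) (w : Om) (v : list nat) : Prop :=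
  match n with
  | O => v = []
  | S m => exists u, In_set m w u /\ cone d (Rad u w) u v
  end.

Definition I_set (w : Om) (v : list nat) : Prop := exists n, In_set n w v.

Definition V_event (w : Om) : Prop :=
  forall l : list (list nat), exists v, I_set w v /\ ~ List.In v l.
End Cone.

Definition iid_geometric (S : ProbSpace) (d : nat) (p : R)
    (Rad : list nat -> Omega S -> nat) : Prop :=
  (forall u k, meas S (fun w => Rad u w = k)) /\
  (forall (ks : list nat) (vs : list (list nat)),
      NoDup vs -> Forall (valid d) vs -> length vs = length ks ->
      Pr S (fun w => Forall2 (fun u k => Rad u w = k) vs ks) =
      fold_right Rmult 1 (map (fun k => (1 - p) * p ^ k) ks)).

From Stdlib Require Import Reals List Arith Lra Lia Classical ClassicalEpsilon
  FunctionalExtensionality PropExtensionality.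
Import ListNotations.
Open Scope R_scope.

(* Down to depth [N] the cluster only depends on the truncated radii [min R_u N], whose
   joint law at finitely many distinct vertices is an explicit product measure.  Through
   it, the probability that the cluster reaches depth [n+1] obeys a recursion in which
   the state is the reach [r] inherited from the ancestors and one generation maps [f] to
   [r |-> E[1 - (1 - f (max r R - 1))^d ; max r R >= 1]].  Its linearisation at [0] is
   [L f r = d E[f (max r R - 1) ; max r R >= 1]].
   If [2 p d <= 1], the potential [h r = g^r - c] satisfies [L h <= (d/g) h] for suitable
   [g > d] and [c < 1], so reaching depth [n] has probability [O((d/g)^n)] and [P[V] = 0].
   If [d p^2 - 2 d p + 1 < 0], the solution of [b (r+1) = p + d (1-p) b r], frozen at a
   large level, satisfies [L b >= (1 + delta) b]; a small multiple of [b] is then a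
   subsolution of the nonlinear recursion, which bounds the probability of reaching any
   depth away from [0], and [P[V] > 0] by continuity from above. *)

Section ProbabilityFacts.
Variable Sp : ProbSpace.
Notation event := (Omega Sp -> Prop).

Lemma meas_ext (A B : event) : meas Sp A -> (forall w, A w <-> B w) -> meas Sp B.
Proof.
  intros HA H. assert (A = B) as <-; auto.
  apply functional_extensionality; intro w; apply propositional_extensionality; auto.
Qed.

Lemma meas_False : meas Sp (fun _ => False).
Proof. eapply meas_ext. apply meas_compl, meas_full. intros; tauto. Qed.

Lemma meas_or (A B : event) : meas Sp A -> meas Sp B -> meas Sp (fun w => A w \/ B w).
Proof.
  intros HA HB.
  eapply meas_ext.
  - apply (meas_cunion Sp (fun n => match n with 0 => A | 1 => B | _ => fun _ => False end)).
    intros [|[|n]]; auto using meas_False.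
  - intro w; split.
    + intros [[|[|n]] H]; tauto.
    + intros [H|H]; [exists 0%nat|exists 1%nat]; auto.
Qed.

Lemma meas_and (A B : event) : meas Sp A -> meas Sp B -> meas Sp (fun w => A w /\ B w).
Proof.
  intros HA HB. eapply meas_ext.
  - apply (meas_compl Sp (fun w => ~ A w \/ ~ B w)), meas_or; apply meas_compl; auto.
  - intro w; split; [intro H; split; apply NNPP; intro; apply H; auto | tauto].
Qed.

Lemma meas_all (A : nat -> event) :
  (forall n, meas Sp (A n)) -> meas Sp (fun w => forall n, A n w).
Proof.
  intros H. eapply meas_ext.
  - apply meas_compl, meas_cunion. intro n; apply meas_compl, H.
  - intro w; split.
    + intros H1 n. apply NNPP; intro; apply H1; eauto.
    + intros H1 [n Hn]; auto.
Qed.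

Lemma Pr_False : Pr Sp (fun _ => False) = 0.
Proof.
  pose proof (Pr_sigma_additive Sp (fun _ _ => False) (fun _ => meas_False)
                (fun _ _ _ _ H _ => H)) as H.
  cbv beta in H. set (c := Pr Sp (fun _ => False)) in *.
  assert (Hc : 0 <= c) by (apply Pr_nonneg, meas_False).
  assert (Hext : Pr Sp (fun w => exists n : nat, False) = c)
    by (apply Pr_ext; intros; split; [intros [_ []]|tauto]).
  rewrite Hext in H.
  assert (Hs : forall n, sum_f_R0 (fun _ => c) n = INR (S n) * c).
  { induction n; simpl sum_f_R0; [simpl; lra|]. rewrite IHn, !S_INR; lra. }
  destruct (Rle_lt_or_eq_dec 0 c Hc) as [Hp|]; [|auto].
  destruct (H c Hp) as [N HN]. specialize (HN (S N) ltac:(lia)).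
  rewrite Hs in HN. unfold R_dist in HN. rewrite !S_INR in HN.
  pose proof (pos_INR N).
  rewrite Rabs_right in HN; nra.
Qed.

Lemma Pr_add (A B : event) : meas Sp A -> meas Sp B -> (forall w, A w -> B w -> False) ->
  Pr Sp (fun w => A w \/ B w) = Pr Sp A + Pr Sp B.
Proof.
  intros HA HB HD.
  set (F := fun n => match n with 0 => A | 1 => B | _ => fun _ => False end).
  assert (HF : forall n, meas Sp (F n)) by (intros [|[|n]]; simpl; auto using meas_False).
  assert (HFD : forall i j w, i <> j -> F i w -> F j w -> False)
    by (intros [|[|i]] [|[|j]] w Hij; simpl; try tauto; try lia; eauto).
  assert (Hsum : forall n, sum_f_R0 (fun i => Pr Sp (F i)) (S n) = Pr Sp A + Pr Sp B).
  { induction n; simpl in *; [ring|]. rewrite IHn, Pr_False; ring. }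
  rewrite (Pr_ext Sp _ (fun w => exists n, F n w)).
  - apply (UL_sequence _ _ _ (Pr_sigma_additive Sp F HF HFD)).
    intros e He. exists 1%nat. intros n Hn.
    destruct n as [|n]; [lia|]. rewrite Hsum. unfold R_dist. rewrite Rminus_diag, Rabs_R0; auto.
  - intro w; split.
    + intros [H|H]; [exists 0%nat|exists 1%nat]; auto.
    + intros [[|[|n]] H]; simpl in H; tauto.
Qed.

Lemma Pr_compl (A : event) : meas Sp A -> Pr Sp (fun w => ~ A w) = 1 - Pr Sp A.
Proof.
  intros HA. rewrite <- (Pr_full Sp).
  rewrite (Pr_ext Sp (fun _ => True) (fun w => A w \/ ~ A w)) by (intro; tauto).
  rewrite Pr_add; auto using meas_compl. ring.
Qed.

Lemma Pr_mono (A B : event) : meas Sp A -> meas Sp B -> (forall w, A w -> B w) ->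
  Pr Sp A <= Pr Sp B.
Proof.
  intros HA HB H.
  assert (Hm : meas Sp (fun w => B w /\ ~ A w)) by (apply meas_and; auto using meas_compl).
  rewrite (Pr_ext Sp B (fun w => A w \/ (B w /\ ~ A w))).
  - rewrite Pr_add; auto; [|tauto]. pose proof (Pr_nonneg Sp _ Hm). lra.
  - intro w; split; [intros Hb; destruct (classic (A w)); tauto|intros [|[]]; auto].
Qed.

Lemma Pr_union_incr (B : nat -> event) :
  (forall n, meas Sp (B n)) -> (forall n w, B n w -> B (S n) w) ->
  Un_cv (fun n => Pr Sp (B n)) (Pr Sp (fun w => exists n, B n w)).
Proof.
  intros HM Hinc.
  set (A := fun n w => match n with 0 => B 0%nat w | S m => B (S m) w /\ ~ B m w end).
  assert (HAm : forall n, meas Sp (A n))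
    by (intros [|n]; simpl; [apply HM|apply meas_and; [apply HM|apply meas_compl, HM]]).
  assert (Hle : forall m n w, (m <= n)%nat -> B m w -> B n w)
    by (intros m n w H; induction H; auto).
  assert (HAD : forall i j w, i <> j -> A i w -> A j w -> False).
  { intros i j w Hij.
    assert (Hlt : forall i j, (i < j)%nat -> A i w -> A j w -> False).
    { intros [|a] [|b] Hab; simpl; try lia.
      - intros H1 [_ H2]; apply H2; eapply Hle; [|eauto]; lia.
      - intros [H1 _] [_ H2]; apply H2; eapply Hle; [|eauto]; lia. }
    destruct (Nat.lt_gt_cases i j) as [[H1|H1] _]; eauto. }
  assert (Hsum : forall n, sum_f_R0 (fun i => Pr Sp (A i)) n = Pr Sp (B n)).
  { induction n; [reflexivity|]. simpl. rewrite IHn.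
    rewrite (Pr_ext Sp (B (S n)) (fun w => B n w \/ A (S n) w)).
    - rewrite Pr_add; auto. intros w H1 [_ H2]; auto.
    - intro w; simpl; split; [intros H; destruct (classic (B n w)); tauto|intros [|[]]; auto]. }
  rewrite (Pr_ext Sp (fun w => exists n, B n w) (fun w => exists n, A n w)).
  - intros e He. destruct (Pr_sigma_additive Sp A HAm HAD e He) as [N HN].
    exists N. intros n Hn. rewrite <- Hsum. auto.
  - intro w; split.
    + intros [n Hn]. induction n; [exists 0%nat; auto|].
      destruct (classic (B n w)) as [Hb|Hb]; auto. exists (S n); simpl; auto.
    + intros [[|n] Hn]; simpl in Hn; [exists 0%nat|exists (S n)]; tauto.
Qed.

Lemma Pr_inter_decr_ge (B : nat -> event) (a : R) :
  (forall n, meas Sp (B n)) -> (forall n w, B (S n) w -> B n w) ->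
  (forall n, a <= Pr Sp (B n)) -> a <= Pr Sp (fun w => forall n, B n w).
Proof.
  intros HM Hdec Ha.
  assert (HMc : forall n, meas Sp (fun w => ~ B n w)) by (intro; apply meas_compl, HM).
  assert (Hcv := Pr_union_incr (fun n w => ~ B n w) HMc (fun n w H H' => H (Hdec n w H'))).
  assert (Hunion : Pr Sp (fun w => exists n, ~ B n w) <= 1 - a).
  { destruct (Rle_lt_dec (Pr Sp (fun w => exists n, ~ B n w)) (1 - a)) as [|Hgt]; auto.
    assert (He : 0 < Pr Sp (fun w => exists n, ~ B n w) - (1 - a)) by lra.
    destruct (Hcv _ He) as [n Hn]. specialize (Hn n (le_n n)).
    specialize (Ha n). rewrite Pr_compl in Hn by auto.
    unfold R_dist in Hn. rewrite Rabs_left1 in Hn; lra. }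
  rewrite (Pr_ext Sp _ (fun w => ~ exists n, ~ B n w)).
  - rewrite Pr_compl by (apply meas_cunion; auto). lra.
  - intro w; split; [intros H [n Hn]; auto|intros H n; apply NNPP; intro; apply H; eauto].
Qed.

End ProbabilityFacts.

Section TruncatedGeometric.
Variable p : R.
Variable N : nat.

(* [geomE f j m] is the sum of [(1-p) p^k f k] over [j <= k < j+m] plus the tail
   mass [p^(j+m) f (j+m)]; so [geomE f 0 N] is the expectation of [f (min R N)]. *)
Fixpoint geomE (f : nat -> R) (j m : nat) : R :=
  match m with
  | O => p ^ j * f j
  | S m' => (1 - p) * p ^ j * f j + geomE f (S j) m'
  end.

(* [prod_law n Phi]: probability that [n] independent copies of [min R N] satisfy [Phi]. *)
Fixpoint prod_law (n : nat) (Phi : list nat -> Prop) : R :=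
  match n with
  | O => if excluded_middle_informative (Phi []) then 1 else 0
  | S n' => geomE (fun k => prod_law n' (fun ks => Phi (k :: ks))) 0 N
  end.

Lemma geomE_ext_from (f g : nat -> R) j m :
  (forall k, (j <= k)%nat -> f k = g k) -> geomE f j m = geomE g j m.
Proof.
  revert j; induction m; intros j H; simpl; rewrite H by lia; [|rewrite (IHm (S j))]; auto.
  intros; apply H; lia.
Qed.

Lemma geomE_ext (f g : nat -> R) j m : (forall k, f k = g k) -> geomE f j m = geomE g j m.
Proof. intros H; apply geomE_ext_from; auto. Qed.

Lemma geomE_lin f g a b j m :
  geomE (fun k => a * f k + b * g k) j m = a * geomE f j m + b * geomE g j m.
Proof. revert j; induction m; intros j; simpl; [|rewrite IHm]; ring. Qed.

Lemma geomE_const c j m : geomE (fun _ => c) j m = p ^ j * c.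
Proof. revert j; induction m; intros j; simpl; [|rewrite IHm; simpl]; ring. Qed.

Lemma prod_law_ext n : forall Phi Psi, (forall ks, Phi ks <-> Psi ks) ->
  prod_law n Phi = prod_law n Psi.
Proof.
  induction n; intros Phi Psi H; simpl.
  - destruct (excluded_middle_informative (Phi [])), (excluded_middle_informative (Psi []));
      firstorder.
  - apply geomE_ext. intro k. apply IHn. intro; apply H.
Qed.

Lemma prod_law_True n : prod_law n (fun _ => True) = 1.
Proof.
  induction n; simpl; [destruct (excluded_middle_informative True); tauto|].
  rewrite (geomE_ext _ (fun _ => 1)) by auto. rewrite geomE_const. simpl; ring.
Qed.

Lemma prod_law_not n : forall Phi, prod_law n (fun ks => ~ Phi ks) = 1 - prod_law n Phi.
Proof.
  induction n; intros Phi; simpl.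
  - destruct (excluded_middle_informative (~ Phi [])), (excluded_middle_informative (Phi []));
      try tauto; ring.
  - rewrite (geomE_ext _ (fun k => 1 * 1 + (-1) * prod_law n (fun ks => Phi (k :: ks)))).
    + rewrite geomE_lin, geomE_const. simpl; ring.
    + intro k. rewrite IHn. ring.
Qed.

Lemma prod_law_False n : prod_law n (fun _ => False) = 0.
Proof.
  rewrite (prod_law_ext n _ (fun _ => ~ True)) by tauto.
  rewrite prod_law_not, prod_law_True. ring.
Qed.

Lemma prod_law_and a : forall b P Q,
  prod_law (a + b) (fun ks => P (firstn a ks) /\ Q (skipn a ks)) = prod_law a P * prod_law b Q.
Proof.
  induction a; intros b P Q; simpl.
  - destruct (excluded_middle_informative (P [])) as [H|H].
    + rewrite Rmult_1_l. apply prod_law_ext. intro; simpl; tauto.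
    + rewrite Rmult_0_l, <- (prod_law_False b). apply prod_law_ext. simpl; tauto.
  - rewrite (geomE_ext _ (fun k => prod_law b Q * prod_law a (fun ks => P (k :: ks)) + 0 * 0)).
    + rewrite geomE_lin. ring.
    + intro k. rewrite (IHa b (fun ks => P (k :: ks)) Q). ring.
Qed.

Lemma prod_law_or a b P Q :
  prod_law (a + b) (fun ks => P (firstn a ks) \/ Q (skipn a ks)) =
  1 - (1 - prod_law a P) * (1 - prod_law b Q).
Proof.
  rewrite <- !prod_law_not, <- prod_law_and.
  rewrite (prod_law_ext _ _ (fun ks => ~ (~ P (firstn a ks) /\ ~ Q (skipn a ks)))).
  - rewrite prod_law_not. ring.
  - intro ks; tauto.
Qed.

Fixpoint some_block (P : list nat -> Prop) (s c : nat) (ks : list nat) : Prop :=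
  match c with
  | O => False
  | S c' => P (firstn s ks) \/ some_block P s c' (skipn s ks)
  end.

Lemma prod_law_some_block P s c :
  prod_law (c * s) (some_block P s c) = 1 - (1 - prod_law s P) ^ c.
Proof.
  induction c.
  - simpl. destruct (excluded_middle_informative False); [tauto|ring].
  - change (S c * s)%nat with (s + c * s)%nat.
    change (some_block P s (S c)) with (fun ks => P (firstn s ks) \/ some_block P s c (skipn s ks)).
    rewrite prod_law_or, IHc. simpl; ring.
Qed.

Hypothesis Hp : 0 < p < 1.

Lemma geomE_mono f g j m : (forall k, f k <= g k) -> geomE f j m <= geomE g j m.
Proof.
  revert j; induction m; intros j H; simpl.
  - apply Rmult_le_compat_l; auto. apply pow_le; lra.
  - apply Rplus_le_compat; auto. apply Rmult_le_compat_l; auto.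
    apply Rmult_le_pos; [lra|apply pow_le; lra].
Qed.

Lemma geomE_nonneg f j m : (forall k, 0 <= f k) -> 0 <= geomE f j m.
Proof.
  intros Hf. replace 0 with (geomE (fun _ => 0) j m) by (rewrite geomE_const; ring).
  apply geomE_mono; auto.
Qed.

Lemma prod_law_nonneg n : forall Phi, 0 <= prod_law n Phi.
Proof.
  induction n; intros Phi; simpl.
  - destruct (excluded_middle_informative _); lra.
  - apply geomE_nonneg. auto.
Qed.

Lemma prod_law_le1 n Phi : prod_law n Phi <= 1.
Proof.
  pose proof (prod_law_not n Phi). pose proof (prod_law_nonneg n (fun ks => ~ Phi ks)). lra.
Qed.

End TruncatedGeometric.

Definition trunc_rad {Om : Type} (Rad : list nat -> Om -> nat) (N : nat) (u : list nat) (w : Om)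
  : nat := Nat.min (Rad u w) N.

Section TruncatedRadii.
Variable Sp : ProbSpace.
Variable d : nat.
Variable p : R.
Variable Rad : list nat -> Omega Sp -> nat.
Variable N : nat.
Hypothesis Hiid : iid_geometric Sp d p Rad.
Notation event := (Omega Sp -> Prop).
Notation trad := (trunc_rad Rad N).

Definition tgeom_weight (k : nat) : R := if (k <? N)%nat then (1 - p) * p ^ k else p ^ N.

Lemma tgeom_weight_cap : tgeom_weight N = p ^ N.
Proof. unfold tgeom_weight. rewrite Nat.ltb_irrefl. auto. Qed.

Lemma tgeom_weight_lt k : (k < N)%nat -> tgeom_weight k = (1 - p) * p ^ k.
Proof. intros. unfold tgeom_weight. destruct (Nat.ltb_spec k N); auto; lia. Qed.

Lemma trad_le_cap u w : (trad u w <= N)%nat.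
Proof. unfold trunc_rad; lia. Qed.

Lemma meas_Rad_pred (u : list nat) (P : nat -> Prop) : meas Sp (fun w => P (Rad u w)).
Proof.
  eapply meas_ext.
  - apply (meas_cunion Sp (fun j w => P j /\ Rad u w = j)). intro j.
    destruct (classic (P j)) as [H|H]; eapply meas_ext;
      [apply (proj1 Hiid u j)| |apply meas_False|]; intro w; cbv beta; tauto.
  - intro w; split; [intros [j [H1 <-]]; auto|intros; eauto].
Qed.

Lemma meas_Rad_cylinder (us : list (list nat)) : forall (Phi : list nat -> Prop),
  meas Sp (fun w => Phi (map (fun u => Rad u w) us)).
Proof.
  induction us as [|u us IH]; intros Phi; simpl.
  - destruct (classic (Phi [])); eapply meas_ext;
      [apply meas_full| |apply meas_False|]; cbv beta; tauto.
  - eapply meas_ext.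
    + apply (meas_cunion Sp (fun j w => Rad u w = j /\ Phi (j :: map (fun u => Rad u w) us))).
      intro j. apply meas_and; [apply (meas_Rad_pred u (fun r => r = j))|].
      apply (IH (fun ks => Phi (j :: ks))).
    + intro w; split; [intros [j [<- H]]; auto|intros; eauto].
Qed.

Lemma meas_trad_cylinder (us : list (list nat)) (Phi : list nat -> Prop) :
  meas Sp (fun w => Phi (map (fun u => trad u w) us)).
Proof.
  eapply meas_ext.
  - apply (meas_Rad_cylinder us (fun ks => Phi (map (fun r => Nat.min r N) ks))).
  - intro w. cbv beta. rewrite map_map. reflexivity.
Qed.

Lemma meas_trad_dep (u : list nat) (A : nat -> event) :
  (forall k, meas Sp (A k)) -> meas Sp (fun w => A (trad u w) w).
Proof.
  intros HA. eapply meas_ext.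
  - apply (meas_cunion Sp (fun k w => trad u w = k /\ A k w)). intro k.
    apply meas_and; auto. apply (meas_Rad_pred u (fun r => Nat.min r N = k)).
  - intro w; split; [intros [k [<- H]]; auto|intros; eauto].
Qed.

Definition pinned (cs : list (list nat * nat)) (w : Omega Sp) : Prop :=
  Forall (fun c => trad (fst c) w = snd c) cs.

Definition pinned_weight (cs : list (list nat * nat)) : R :=
  fold_right Rmult 1 (map (fun c => tgeom_weight (snd c)) cs).

Lemma pinned_weight_app c1 c2 : pinned_weight (c1 ++ c2) = pinned_weight c1 * pinned_weight c2.
Proof. unfold pinned_weight. induction c1; simpl; [ring|]. rewrite IHc1; ring. Qed.

Lemma pinned_weight_mid c1 c2 u k :
  pinned_weight (c1 ++ (u, k) :: c2) = pinned_weight (c1 ++ c2) * tgeom_weight k.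
Proof. rewrite !pinned_weight_app. unfold pinned_weight; simpl. ring. Qed.

Lemma pinned_mid c1 c2 u k w :
  pinned (c1 ++ (u, k) :: c2) w <-> pinned (c1 ++ c2) w /\ trad u w = k.
Proof. unfold pinned. rewrite !Forall_app, Forall_cons_iff. simpl. tauto. Qed.

Lemma meas_pinned cs : meas Sp (pinned cs).
Proof.
  induction cs as [|c cs IH]; unfold pinned.
  - eapply meas_ext; [apply meas_full|]. intro; split; auto.
  - eapply meas_ext.
    + apply meas_and; [|apply IH]. apply (meas_Rad_pred (fst c) (fun r => Nat.min r N = snd c)).
    + intro w. rewrite Forall_cons_iff. reflexivity.
Qed.

Definition distinct_vertices (us : list (list nat)) : Prop := NoDup us /\ Forall (valid d) us.

Lemma Pr_pinned_below_cap cs : Forall (fun c => snd c < N)%nat cs ->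
  distinct_vertices (map fst cs) -> Pr Sp (pinned cs) = pinned_weight cs.
Proof.
  intros Hlt [Hnd Hv].
  rewrite (Pr_ext Sp (pinned cs) (fun w => Forall2 (fun u k => Rad u w = k) (map fst cs) (map snd cs))).
  - rewrite (proj2 Hiid); auto; [|rewrite !length_map; auto].
    unfold pinned_weight. rewrite map_map.
    clear - Hlt. induction cs; simpl; auto. inversion Hlt; subst. f_equal; auto.
    symmetry; apply tgeom_weight_lt; auto.
  - intro w. unfold pinned. clear - Hlt. induction cs as [|a cs IHcs]; simpl; [split; auto|].
    inversion Hlt as [|? ? Ha Hb]; subst. rewrite Forall_cons_iff, IHcs by auto.
    unfold trunc_rad. split.
    + intros [Hx Hy]; constructor; auto; lia.
    + intros Hx; inversion Hx; subst; split; auto; lia.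
Qed.

(* The capped value [trad u = N] is the event [Rad u >= N]; its probability is obtained
   from those of the values below the cap by complementation, one level at a time. *)
Lemma Pr_pinned_trad_ge c1 c2 u :
  (forall k, (k < N)%nat ->
     Pr Sp (pinned (c1 ++ (u, k) :: c2)) = pinned_weight (c1 ++ (u, k) :: c2)) ->
  Pr Sp (pinned (c1 ++ c2)) = pinned_weight (c1 ++ c2) ->
  forall j, (j <= N)%nat ->
  Pr Sp (fun w => pinned (c1 ++ c2) w /\ (j <= trad u w)%nat) = pinned_weight (c1 ++ c2) * p ^ j.
Proof.
  intros Hbelow Hrest. induction j; intros Hj.
  - rewrite (Pr_ext Sp _ (pinned (c1 ++ c2))) by (intro; split; [tauto|split; [auto|lia]]).
    simpl. lra.
  - assert (Hsplit : Pr Sp (fun w => pinned (c1 ++ c2) w /\ (j <= trad u w)%nat) =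
      Pr Sp (pinned (c1 ++ (u, j) :: c2)) +
      Pr Sp (fun w => pinned (c1 ++ c2) w /\ (S j <= trad u w)%nat)).
    { rewrite <- Pr_add.
      - apply Pr_ext. intro w. rewrite pinned_mid. split.
        + intros [H1 H2]. destruct (Nat.eq_dec (trad u w) j); [left|right]; split; auto; lia.
        + intros [[H1 H2]|[H1 H2]]; split; auto; lia.
      - apply meas_pinned.
      - apply meas_and; [apply meas_pinned|].
        apply (meas_Rad_pred u (fun r => S j <= Nat.min r N)%nat).
      - intros w H1 [H2 H3]. rewrite pinned_mid in H1. lia. }
    rewrite IHj, Hbelow, pinned_weight_mid, tgeom_weight_lt in Hsplit by lia.
    simpl. lra.
Qed.

Definition n_capped (cs : list (list nat * nat)) : nat :=
  length (filter (fun c => Nat.eqb (snd c) N) cs).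

Lemma n_capped_app c1 c2 : n_capped (c1 ++ c2) = (n_capped c1 + n_capped c2)%nat.
Proof. unfold n_capped. rewrite filter_app, length_app. auto. Qed.

Lemma n_capped_mid c1 c2 u k :
  n_capped (c1 ++ (u, k) :: c2) = (n_capped (c1 ++ c2) + if Nat.eqb k N then 1 else 0)%nat.
Proof.
  rewrite !n_capped_app. unfold n_capped at 2 4. simpl. destruct (Nat.eqb k N); simpl; lia.
Qed.

Lemma Pr_pinned : forall n cs, (n_capped cs <= n)%nat -> Forall (fun c => snd c <= N)%nat cs ->
  distinct_vertices (map fst cs) -> Pr Sp (pinned cs) = pinned_weight cs.
Proof.
  induction n; intros cs Hc Hle [Hnd Hv];
  (destruct (classic (exists u, In (u, N) cs)) as [[u Hin]|Hno];
   [|apply Pr_pinned_below_cap; [|split; auto]; rewrite Forall_forall in *; intros [u k] Hin;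
     specialize (Hle _ Hin); simpl in *; destruct (Nat.eq_dec k N); [subst; exfalso; eauto|lia]]);
  destruct (in_split _ _ Hin) as [c1 [c2 ->]];
  rewrite n_capped_mid, Nat.eqb_refl in Hc; [lia|].
  rewrite map_app in Hnd, Hv. simpl in Hnd, Hv.
  rewrite Forall_app, Forall_cons_iff in Hle, Hv.
  assert (Hdist : forall k, distinct_vertices (map fst (c1 ++ (u, k) :: c2)))
    by (intro; rewrite map_app; simpl; split; auto; apply Forall_app; split; [|constructor]; tauto).
  assert (Hdist0 : distinct_vertices (map fst (c1 ++ c2))).
  { rewrite map_app. split; [eapply NoDup_remove_1; eauto|apply Forall_app; tauto]. }
  assert (Hle0 : Forall (fun c => snd c <= N)%nat (c1 ++ c2)) by (apply Forall_app; tauto).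
  rewrite (Pr_ext Sp _ (fun w => pinned (c1 ++ c2) w /\ (N <= trad u w)%nat)).
  - rewrite (Pr_pinned_trad_ge c1 c2 u), pinned_weight_mid, tgeom_weight_cap; auto.
    + intros k Hk. apply IHn; auto.
      * rewrite n_capped_mid. destruct (Nat.eqb_spec k N); lia.
      * apply Forall_app; split; [tauto|constructor; simpl; [lia|tauto]].
    + apply IHn; auto. lia.
  - intro w. rewrite pinned_mid. pose proof (trad_le_cap u w). split; intros [H1 H2]; split; auto; lia.
Qed.

(* Conditioning on the value of one more truncated radius. *)
Lemma Pr_sum_over_trad (B : event) (A : nat -> event) (u : list nat) (W : R) (g : nat -> R) :
  meas Sp B -> (forall k, meas Sp (A k)) ->
  (forall k, (k <= N)%nat ->
     Pr Sp (fun w => (B w /\ trad u w = k) /\ A k w) = W * tgeom_weight k * g k) ->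
  forall m j, (j + m)%nat = N ->
  Pr Sp (fun w => B w /\ (j <= trad u w)%nat /\ A (trad u w) w) = W * geomE p g j m.
Proof.
  intros HB HA Hterm. induction m; intros j Hj.
  - rewrite (Pr_ext Sp _ (fun w => (B w /\ trad u w = N) /\ A N w)).
    + rewrite Hterm, tgeom_weight_cap by lia. simpl. replace j with N by lia. ring.
    + intro w. pose proof (trad_le_cap u w). split.
      * intros [H1 [H2 H3]]. assert (E : trad u w = N) by lia. rewrite E in H3. tauto.
      * intros [[H1 H2] H3]. rewrite H2. repeat split; auto; lia.
  - rewrite (Pr_ext Sp _ (fun w => ((B w /\ trad u w = j) /\ A j w) \/
                                   (B w /\ (S j <= trad u w)%nat /\ A (trad u w) w))).
    + rewrite Pr_add.
      * rewrite Hterm, IHm, tgeom_weight_lt by lia. simpl. ring.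
      * apply meas_and; auto. apply meas_and; auto.
        apply (meas_Rad_pred u (fun r => Nat.min r N = j)).
      * apply meas_and; auto. apply meas_and; [|apply meas_trad_dep; auto].
        apply (meas_Rad_pred u (fun r => S j <= Nat.min r N)%nat).
      * intros w [[_ H1] _] [_ [H2 _]]. lia.
    + intro w. split.
      * intros [H1 [H2 H3]]. destruct (Nat.eq_dec (trad u w) j) as [E|E].
        -- left. rewrite <- E. tauto.
        -- right. repeat split; auto; lia.
      * intros [[[H1 H2] H3]|[H1 [H2 H3]]]; [subst|]; repeat split; auto; lia.
Qed.

Lemma Pr_pinned_cylinder : forall us cs Phi, Forall (fun c => snd c <= N)%nat cs ->
  distinct_vertices (map fst cs ++ us) ->
  Pr Sp (fun w => pinned cs w /\ Phi (map (fun u => trad u w) us)) =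
  pinned_weight cs * prod_law p N (length us) Phi.
Proof.
  induction us as [|u us IH]; intros cs Phi Hle [Hnd Hv].
  - simpl. rewrite app_nil_r in Hnd, Hv.
    destruct (excluded_middle_informative (Phi [])) as [H|H].
    + rewrite (Pr_ext Sp _ (pinned cs)) by (intro; tauto).
      rewrite (Pr_pinned (n_capped cs)); auto; [ring|split; auto].
    + rewrite (Pr_ext Sp _ (fun _ => False)) by (intro; tauto). rewrite Pr_False. ring.
  - rewrite (Pr_ext Sp _ (fun w => pinned cs w /\ (0 <= trad u w)%nat /\
                                    Phi (trad u w :: map (fun u => trad u w) us)))
      by (intro w; simpl; split; [intros [H1 H2]; repeat split; auto; lia|tauto]).
    change (prod_law p N (length (u :: us)) Phi)
      with (geomE p (fun k => prod_law p N (length us) (fun ks => Phi (k :: ks))) 0 N).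
    apply (Pr_sum_over_trad _ (fun k w => Phi (k :: map (fun u => trad u w) us)));
      [apply meas_pinned|intro k; apply (meas_trad_cylinder us (fun ks => Phi (k :: ks)))| |lia].
    intros k Hk.
    transitivity (pinned_weight (cs ++ [(u, k)]) * prod_law p N (length us) (fun ks => Phi (k :: ks))).
    + rewrite <- IH.
      * apply Pr_ext. intro w. unfold pinned. rewrite Forall_app, Forall_cons_iff. simpl.
        assert (Forall (fun c => trunc_rad Rad N (fst c) w = snd c) []) by constructor. tauto.
      * apply Forall_app; split; auto.
      * rewrite map_app, <- app_assoc. split; auto.
    + rewrite pinned_weight_app. unfold pinned_weight at 2; simpl. ring.
Qed.

End TruncatedRadii.

Local Open Scope nat_scope.

Section Coverage.
Variable d : nat.
Variable Om : Type.
Variable Rad : list nat -> Om -> nat.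

(* [reach w v] is the largest [Rad a w - d(a, v)] over the ancestors [a <= v] (with
   truncated subtraction): how far below [v] the cones of its ancestors still reach. *)
Fixpoint reach (w : Om) (v : list nat) : nat :=
  match v with
  | [] => Rad [] w
  | i :: u => Nat.max (reach w u - 1) (Rad (i :: u) w)
  end.

Fixpoint covered (w : Om) (v : list nat) : Prop :=
  match v with
  | [] => True
  | i :: u => covered w u /\ 1 <= reach w u
  end.

Lemma Rad_le_reach w u : Rad u w <= reach w u.
Proof. destruct u; simpl; lia. Qed.

Lemma reach_app w z u : Rad u w - length z <= reach w (z ++ u).
Proof.
  induction z as [|i z IH]; simpl; [|lia]. rewrite Nat.sub_0_r. apply Rad_le_reach.
Qed.

Lemma covered_app_cone w z u : covered w u -> length z <= Rad u w -> covered w (z ++ u).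
Proof.
  induction z as [|i z IH]; simpl; intros H1 H2; auto.
  split; [apply IH; auto; lia|]. pose proof (reach_app w z u). lia.
Qed.

Lemma valid_app_r z u : valid d (z ++ u) -> valid d u.
Proof. induction z as [|i z IH]; simpl; auto. intros [H _]; auto. Qed.

Lemma covered_app_r w z u : covered w (z ++ u) -> covered w u.
Proof. induction z as [|i z IH]; simpl; auto. intros [H _]; auto. Qed.

Lemma reach_witness w : forall u k, k <= reach w u ->
  exists z a, u = z ++ a /\ length z + k <= Rad a w.
Proof.
  induction u as [|i u IH]; intros k H.
  - exists [], []. simpl in *. split; auto; lia.
  - destruct (Nat.le_gt_cases k (Rad (i :: u) w)).
    + exists [], (i :: u). simpl. split; auto; lia.
    + simpl in H. destruct (IH (S k)) as [z [a [-> Ha]]]; [lia|].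
      exists (i :: z), a. simpl. split; auto. lia.
Qed.

Lemma In_set_covered w : forall n v, In_set d Om Rad n w v -> valid d v /\ covered w v.
Proof.
  induction n; intros v H; simpl in H.
  - subst. simpl. auto.
  - destruct H as [u [Hu [Hv [[z ->] Hd]]]]. destruct (IHn u Hu) as [_ Hc].
    split; auto. apply covered_app_cone; auto. unfold tdist in Hd. rewrite length_app in Hd. lia.
Qed.

Lemma covered_In_set w : forall L v, length v <= L -> valid d v -> covered w v ->
  exists n, In_set d Om Rad n w v.
Proof.
  induction L; intros v Hl Hv Hc.
  - destruct v; simpl in Hl; [|lia]. exists 0. reflexivity.
  - destruct v as [|i u]; [exists 0; reflexivity|].
    destruct Hc as [Hc Hx].
    destruct (reach_witness w u 1 Hx) as [z [a [-> Ha]]].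
    assert (Hva : valid d a) by (apply (valid_app_r (i :: z)); auto).
    assert (Hca : covered w a) by (apply (covered_app_r w z); auto).
    destruct (IHL a) as [n Hn]; auto; [simpl in Hl; rewrite length_app in Hl; lia|].
    exists (S n). simpl. exists a. split; auto. split; auto. split.
    + exists (i :: z). reflexivity.
    + unfold tdist. change (length ((i :: z) ++ a) - length a <= Rad a w).
      rewrite length_app. simpl length. lia.
Qed.

Lemma I_set_iff w v : I_set d Om Rad w v <-> valid d v /\ covered w v.
Proof.
  split.
  - intros [n H]. eapply In_set_covered; eauto.
  - intros [H1 H2]. eapply covered_In_set; eauto.
Qed.

Definition covered_at_depth (n : nat) (w : Om) : Prop :=
  exists v, valid d v /\ length v = n /\ covered w v.

Lemma covered_at_depth_pred n w : covered_at_depth (S n) w -> covered_at_depth n w.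
Proof.
  intros [[|i u] [Hv [Hl Hc]]]; simpl in *; [lia|].
  exists u. destruct Hv, Hc. repeat split; auto; lia.
Qed.

Fixpoint bounded_lists (k : nat) : list (list nat) :=
  match k with
  | O => [[]]
  | S k' => flat_map (fun u => map (fun i => i :: u) (seq 0 (S d))) (bounded_lists k')
  end.

Lemma valid_In_bounded_lists : forall v, valid d v -> In v (bounded_lists (length v)).
Proof.
  induction v as [|i u IH]; [simpl; auto|]. intros [Hu Hi].
  apply in_flat_map. exists u. split; auto. apply in_map_iff. exists i. split; auto.
  apply in_seq. destruct u; lia.
Qed.

Lemma valid_skipn k : forall v, valid d v -> valid d (skipn k v).
Proof. induction k; intros [|i v] H; simpl; auto. apply IHk. destruct H; auto. Qed.

Lemma covered_skipn w k : forall v, covered w v -> covered w (skipn k v).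
Proof. induction k; intros [|i v] H; simpl; auto. apply IHk. destruct H; auto. Qed.

(* [I] is infinite iff it is unbounded in depth, since each level of the tree is finite. *)
Lemma V_event_iff w : V_event d Om Rad w <-> forall n, covered_at_depth n w.
Proof.
  split.
  - intros HV n.
    destruct (HV (flat_map bounded_lists (seq 0 (S n)))) as [v [HI Hn]].
    apply I_set_iff in HI. destruct HI as [Hv Hc].
    assert (n < length v).
    { destruct (Nat.le_gt_cases (length v) n); auto. exfalso; apply Hn.
      apply in_flat_map. exists (length v). split; [apply in_seq; lia|].
      apply valid_In_bounded_lists; auto. }
    exists (skipn (length v - n) v). repeat split.
    + apply valid_skipn; auto.
    + rewrite length_skipn. lia.
    + apply covered_skipn; auto.
  - intros HE l.
    destruct (HE (S (list_max (map (@length nat) l)))) as [v [Hv [Hl Hc]]].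
    exists v. split; [apply I_set_iff; auto|].
    intro Hin. assert (length v <= list_max (map (@length nat) l)); [|lia].
    assert (Hall := proj1 (list_max_le (map (@length nat) l) _) (le_n _)).
    rewrite Forall_forall in Hall. apply Hall, in_map; auto.
Qed.

End Coverage.

Section Subtrees.
Variable d : nat.

Definition n_children (v : list nat) : nat := match v with [] => S d | _ :: _ => d end.

Fixpoint subtree_size (m : nat) : nat := match m with O => O | S m' => S (d * subtree_size m') end.

Fixpoint subtree (n : nat) (v : list nat) : list (list nat) :=
  match n with
  | O => []
  | S m => v :: flat_map (fun i => subtree m (i :: v)) (seq 0 (n_children v))
  end.

Lemma length_flat_map_const {A B} (f : A -> list B) s : forall l,
  (forall i, length (f i) = s) -> length (flat_map f l) = length l * s.
Proof. induction l; intros H; simpl; auto. rewrite length_app, H, IHl; auto. Qed.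

Lemma length_subtree m : forall v, v <> [] -> length (subtree m v) = subtree_size m.
Proof.
  induction m; intros v Hv; simpl; auto. f_equal.
  rewrite (length_flat_map_const _ (subtree_size m)).
  - rewrite length_seq. destruct v; [congruence|auto].
  - intros; apply IHm; discriminate.
Qed.

Lemma In_subtree n : forall v x, In x (subtree n v) -> exists z, x = z ++ v /\ length z < n.
Proof.
  induction n; intros v x H; simpl in H; [tauto|].
  destruct H as [<-|H]; [exists []; simpl; split; auto; lia|].
  apply in_flat_map in H. destruct H as [i [_ Hi]]. destruct (IHn _ _ Hi) as [z [-> Hz]].
  exists (z ++ [i]). rewrite <- app_assoc, length_app. simpl. split; auto; lia.
Qed.

Lemma NoDup_flat_map {A B} (f : A -> list B) : forall l, NoDup l -> (forall i, NoDup (f i)) ->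
  (forall i j x, i <> j -> In x (f i) -> In x (f j) -> False) -> NoDup (flat_map f l).
Proof.
  induction l as [|a l IH]; intros Hl Hf Hd; simpl; [constructor|].
  inversion Hl; subst. apply NoDup_app; auto.
  intros x Hx Hx'. apply in_flat_map in Hx'. destruct Hx' as [j [Hj Hxj]].
  apply (Hd a j x); auto. intro; subst; auto.
Qed.

Lemma NoDup_subtree n : forall v, NoDup (subtree n v).
Proof.
  induction n; intros v; simpl; constructor.
  - intro H. apply in_flat_map in H. destruct H as [i [_ Hi]].
    destruct (In_subtree _ _ _ Hi) as [z [Hz _]].
    apply (f_equal (@length nat)) in Hz. rewrite length_app in Hz; simpl in Hz; lia.
  - apply NoDup_flat_map; auto; [apply seq_NoDup|].
    intros i j x Hij Hi Hj. destruct (In_subtree _ _ _ Hi) as [z [-> _]].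
    destruct (In_subtree _ _ _ Hj) as [z' [Hz _]].
    replace (z ++ i :: v) with ((z ++ [i]) ++ v) in Hz by (rewrite <- app_assoc; reflexivity).
    replace (z' ++ j :: v) with ((z' ++ [j]) ++ v) in Hz by (rewrite <- app_assoc; reflexivity).
    apply app_inv_tail, app_inj_tail in Hz. destruct Hz; auto.
Qed.

Lemma valid_subtree n : forall v x, valid d v -> In x (subtree n v) -> valid d x.
Proof.
  induction n; intros v x Hv H; simpl in H; [tauto|].
  destruct H as [<-|H]; auto. apply in_flat_map in H. destruct H as [i [Hi Hx]].
  apply in_seq in Hi. apply (IHn (i :: v)); auto. split; auto. destruct v; simpl in *; lia.
Qed.

(* [descends] read off the radii listed along [subtree n v]; [c] is the number of children
   of the top vertex. *)
Fixpoint descent_pred (n c r : nat) (ks : list nat) : Prop :=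
  match n with
  | O => True
  | S m => match ks with
           | [] => False
           | k :: rest => 1 <= Nat.max r k /\
               some_block (descent_pred m d (Nat.max r k - 1)) (subtree_size m) c rest
           end
  end.

End Subtrees.

Section Descents.
Variable d : nat.
Variable Om : Type.
Variable Rad : list nat -> Om -> nat.
Notation reach := (reach Om Rad).
Notation covered := (covered Om Rad).
Notation n_children := (n_children d).
Notation subtree := (subtree d).
Notation subtree_size := (subtree_size d).
Notation descent_pred := (descent_pred d).

(* [descends n v r w]: entering [v] with reach [r] from above, some path of [n] covered
   vertices leads down from [v]. *)
Fixpoint descends (n : nat) (v : list nat) (r : nat) (w : Om) : Prop :=
  match n with
  | O => True
  | S m => 1 <= Nat.max r (Rad v w) /\
           exists i, i < n_children v /\ descends m (i :: v) (Nat.max r (Rad v w) - 1) w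
  end.

Definition inherited_reach (w : Om) (v : list nat) : nat :=
  match v with [] => 0 | _ :: u => reach w u - 1 end.

Lemma reach_inherited w v : reach w v = Nat.max (inherited_reach w v) (Rad v w).
Proof. destruct v; simpl; lia. Qed.

Lemma descends_iff w : forall n v, valid d v -> covered w v ->
  (descends n v (inherited_reach w v) w <->
   exists z, length z = n /\ valid d (z ++ v) /\ covered w (z ++ v)).
Proof.
  induction n; intros v Hv Hc.
  - simpl. split; auto. intros _. exists []. simpl; auto.
  - simpl descends. rewrite <- reach_inherited. split.
    + intros [H1 [i [Hi HG]]].
      destruct (proj1 (IHn (i :: v) (conj Hv Hi) (conj Hc H1)) HG) as [z [Hz1 [Hz2 Hz3]]].
      exists (z ++ [i]). rewrite <- app_assoc, length_app. simpl. repeat split; auto. lia.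
    + intros [z [Hz1 [Hz2 Hz3]]].
      destruct (exists_last (l := z)) as [z' [i ->]];
        [destruct z; simpl in Hz1; [lia|discriminate]|].
      rewrite <- app_assoc in Hz2, Hz3. simpl in Hz2, Hz3.
      pose proof (valid_app_r d z' _ Hz2) as [Hv' Hi].
      pose proof (covered_app_r Om Rad w z' _ Hz3) as [Hc' Hx].
      split; auto. exists i. split; [destruct v; auto|].
      apply (IHn (i :: v)); [split; auto|split; auto|].
      exists z'. rewrite length_app in Hz1. simpl in Hz1. repeat split; auto. lia.
Qed.

Lemma covered_at_depth_iff_descends w n :
  covered_at_depth d Om Rad n w <-> descends n [] 0 w.
Proof.
  change 0 with (inherited_reach w []). rewrite (descends_iff w n [] I I).
  unfold covered_at_depth. split.
  - intros [v [Hv [Hl Hc]]]. exists v. rewrite app_nil_r. auto.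
  - intros [z [Hl [Hv Hc]]]. rewrite app_nil_r in *. exists z. auto.
Qed.

Lemma descends_iff_descent_pred w n : forall v r,
  descends n v r w <-> descent_pred n (n_children v) r (map (fun u => Rad u w) (subtree n v)).
Proof.
  induction n; intros v r; simpl; [tauto|].
  apply and_iff_compat_l.
  set (s := Nat.max r (Rad v w) - 1).
  assert (Hgen : forall l, some_block (descent_pred n d s) (subtree_size n) (length l)
      (map (fun u => Rad u w) (flat_map (fun i => subtree n (i :: v)) l)) <->
      exists i, In i l /\ descends n (i :: v) s w).
  { induction l as [|i l IHl]; simpl; [split; [tauto|intros [? [[] _]]]|].
    rewrite map_app.
    assert (Hlen : length (map (fun u => Rad u w) (subtree n (i :: v))) = subtree_size n)
      by (rewrite length_map; apply length_subtree; discriminate).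
    rewrite <- Hlen at 1. rewrite firstn_app, Nat.sub_diag, firstn_O, app_nil_r, firstn_all.
    rewrite <- Hlen. rewrite skipn_app, Nat.sub_diag, skipn_O, skipn_all. simpl app.
    rewrite Hlen, IHl. change d with (n_children (i :: v)) at 1. rewrite <- (IHn (i :: v) s).
    split.
    - intros [H|[j [Hj H]]]; [exists i|exists j]; auto.
    - intros [j [[<-|Hj] H]]; [left|right; exists j]; auto. }
  pose proof (Hgen (seq 0 (n_children v))) as HG. rewrite length_seq in HG. rewrite HG.
  split; intros [i [Hi H]]; exists i; split; auto; apply in_seq in Hi || apply in_seq; lia.
Qed.

End Descents.

Section Truncation.
Variable Om : Type.
Variable Rad : list nat -> Om -> nat.
Variable N : nat.
Notation trad := (trunc_rad Rad N).

Lemma reach_trunc w : forall u, length u <= N ->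
  Nat.min (reach Om Rad w u) (N - length u) = Nat.min (reach Om trad w u) (N - length u).
Proof.
  induction u as [|i u IH]; intros Hl; simpl; [unfold trunc_rad; lia|].
  simpl length in *. specialize (IH ltac:(lia)).
  set (a := reach Om Rad w u) in *. set (b := reach Om trad w u) in *.
  unfold trunc_rad. lia.
Qed.

Lemma covered_trunc w : forall v, length v <= N -> (covered Om Rad w v <-> covered Om trad w v).
Proof.
  induction v as [|i u IH]; intros Hl; simpl; [tauto|].
  simpl in Hl. rewrite IH by lia. pose proof (reach_trunc w u ltac:(lia)).
  split; intros [H1 H2]; split; auto; lia.
Qed.

Lemma covered_at_depth_trunc d n w : n <= N ->
  covered_at_depth d Om Rad n w <-> covered_at_depth d Om trad n w.
Proof.
  intros Hn. unfold covered_at_depth.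
  split; intros [v [Hv [Hl Hc]]]; exists v; repeat split; auto; apply covered_trunc; auto; lia.
Qed.

End Truncation.

Local Open Scope R_scope.

Section SurvivalRecursion.
Variable p : R.
Variable N : nat.

(* One generation: entering a vertex with reach [r] and drawing its radius [k], the
   descent continues with reach [max r k - 1] through any of its [c] children. *)
Definition branch_step (c : nat) (f : nat -> R) (r : nat) : R :=
  geomE p (fun k => if le_dec 1 (Nat.max r k)
                    then 1 - (1 - f (Nat.max r k - 1)%nat) ^ c else 0) 0 N.

Definition survival (d m r : nat) : R :=
  prod_law p N (subtree_size d m) (descent_pred d m d r).

Lemma prod_law_descent_pred_S d m c r :
  prod_law p N (S (c * subtree_size d m)) (descent_pred d (S m) c r) =
  branch_step c (survival d m) r.
Proof.
  simpl prod_law. unfold branch_step. apply geomE_ext. intro k. simpl descent_pred.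
  destruct (le_dec 1 (Nat.max r k)) as [H|H].
  - rewrite (prod_law_ext p N _ _ (some_block (descent_pred d m d (Nat.max r k - 1)%nat)
                                     (subtree_size d m) c)) by tauto.
    apply prod_law_some_block.
  - rewrite (prod_law_ext p N _ _ (fun _ => False)) by tauto. apply prod_law_False.
Qed.

Lemma survival_0 d r : survival d 0 r = 1.
Proof. unfold survival. simpl. destruct (excluded_middle_informative True); tauto. Qed.

Lemma survival_S d m r : survival d (S m) r = branch_step d (survival d m) r.
Proof. apply prod_law_descent_pred_S. Qed.

Hypothesis Hp : 0 < p < 1.

Lemma survival_range d m r : 0 <= survival d m r <= 1.
Proof. unfold survival. split; [apply prod_law_nonneg|apply prod_law_le1]; auto. Qed.

Lemma branch_step_mono c f f' r : (forall r, 0 <= f' r <= f r) -> (forall r, f r <= 1) ->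
  branch_step c f' r <= branch_step c f r.
Proof.
  intros H1 H2. unfold branch_step. apply geomE_mono; auto. intro k.
  destruct (le_dec 1 (Nat.max r k)); [|lra].
  specialize (H1 (Nat.max r k - 1)%nat). specialize (H2 (Nat.max r k - 1)%nat).
  assert ((1 - f (Nat.max r k - 1)%nat) ^ c <= (1 - f' (Nat.max r k - 1)%nat) ^ c)
    by (apply pow_incr; lra).
  lra.
Qed.

Lemma branch_step_S c f r : (forall r, 0 <= f r <= 1) ->
  branch_step c f r <= branch_step (S c) f r.
Proof.
  intros H. unfold branch_step. apply geomE_mono; auto. intro k.
  destruct (le_dec 1 (Nat.max r k)); [|lra].
  specialize (H (Nat.max r k - 1)%nat). simpl.
  assert (0 <= (1 - f (Nat.max r k - 1)%nat) ^ c) by (apply pow_le; lra). nra.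
Qed.

End SurvivalRecursion.

Section LawOfCoverage.
Variable Sp : ProbSpace.
Variable d : nat.
Variable p : R.
Variable Rad : list nat -> Omega Sp -> nat.
Variable N : nat.
Hypothesis Hiid : iid_geometric Sp d p Rad.
Notation trad := (trunc_rad Rad N).
Notation descends := (descends d (Omega Sp) trad).

Lemma Pr_descends n v r : valid d v ->
  Pr Sp (descends n v r) =
  prod_law p N (length (subtree d n v)) (descent_pred d n (n_children d v) r).
Proof.
  intros Hv.
  transitivity (Pr Sp (fun w => pinned Sp Rad N [] w /\
    descent_pred d n (n_children d v) r (map (fun u => trad u w) (subtree d n v)))).
  - apply Pr_ext. intro w. rewrite (descends_iff_descent_pred d (Omega Sp) trad). unfold pinned.
    split; [intros; split; auto|tauto].
  - rewrite (Pr_pinned_cylinder Sp d p Rad N Hiid); [unfold pinned_weight; simpl; ring|auto|].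
    split; [apply NoDup_subtree|]. apply Forall_forall. intros x Hx.
    apply (valid_subtree d n v); auto.
Qed.

Lemma covered_at_depth_iff_descends_trunc n w : (n <= N)%nat ->
  covered_at_depth d (Omega Sp) Rad n w <-> descends n [] 0 w.
Proof.
  intros Hn. rewrite (covered_at_depth_trunc (Omega Sp) Rad N) by auto.
  apply covered_at_depth_iff_descends.
Qed.

Lemma meas_covered_at_depth n : (n <= N)%nat -> meas Sp (covered_at_depth d (Omega Sp) Rad n).
Proof.
  intros Hn. eapply meas_ext.
  - apply (meas_trad_cylinder Sp d p Rad N Hiid (subtree d n []) (descent_pred d n (S d) 0)).
  - intro w. rewrite covered_at_depth_iff_descends_trunc by auto.
    rewrite (descends_iff_descent_pred d (Omega Sp) trad). tauto.
Qed.

Lemma Pr_covered_at_depth n : (S n <= N)%nat ->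
  Pr Sp (covered_at_depth d (Omega Sp) Rad (S n)) = branch_step p N (S d) (survival p N d n) 0.
Proof.
  intros Hn.
  rewrite (Pr_ext Sp _ (descends (S n) [] 0))
    by (intro; apply covered_at_depth_iff_descends_trunc; auto).
  rewrite Pr_descends by exact I. rewrite <- prod_law_descent_pred_S. f_equal.
  change (S (length (flat_map (fun i => subtree d n [i]) (seq 0 (S d)))) =
          S (S d * subtree_size d n))%nat.
  rewrite (length_flat_map_const _ (subtree_size d n)), length_seq; auto.
  intro; apply length_subtree; discriminate.
Qed.

End LawOfCoverage.

Lemma pow_le1 x n : 0 <= x <= 1 -> x ^ n <= 1.
Proof. intros H. induction n; simpl; nra. Qed.

Lemma pow_decr x m n : 0 <= x <= 1 -> (m <= n)%nat -> x ^ n <= x ^ m.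
Proof.
  intros Hx Hmn. replace n with (m + (n - m))%nat by lia. rewrite pow_add.
  pose proof (pow_le1 x (n - m) Hx). pose proof (pow_le x m (proj1 Hx)). nra.
Qed.

Lemma Bernoulli_lower a n : 0 <= a <= 1 -> 1 - INR n * a <= (1 - a) ^ n.
Proof.
  intros H. induction n; [simpl; lra|]. rewrite S_INR. simpl.
  pose proof (pos_INR n). nra.
Qed.

Lemma Bernoulli_upper a n : 0 <= a <= 1 -> (1 - a) ^ n <= 1 - INR n * a + INR n ^ 2 * a ^ 2.
Proof.
  intros H. induction n; [simpl; lra|]. rewrite S_INR. simpl.
  pose proof (pos_INR n).
  assert (0 <= 1 - INR n * a + INR n ^ 2 * a ^ 2) by nra.
  simpl in IHn. nra.
Qed.

Lemma le0_of_le_geometric x C q : 0 <= q < 1 -> (forall n, x <= C * q ^ n) -> x <= 0.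
Proof.
  intros Hq Hx. destruct (Rle_lt_dec x 0) as [|Hpos]; auto. exfalso.
  assert (HC : 0 < C) by (specialize (Hx 0%nat); simpl in Hx; lra).
  destruct (pow_lt_1_zero q ltac:(rewrite Rabs_right; lra) (x / C)
              ltac:(apply Rdiv_lt_0_compat; auto)) as [n Hn].
  specialize (Hn n (le_n n)). rewrite Rabs_right in Hn by (apply Rle_ge, pow_le; lra).
  specialize (Hx n). apply Rmult_lt_compat_l with (r := C) in Hn; auto.
  replace (C * (x / C)) with x in Hn by (field; lra). lra.
Qed.

Section SubcriticalBound.
Variable p : R.
Variable N : nat.
Variable g c : R.
Hypothesis Hp : 0 < p < 1.
Hypothesis Hg : 1 <= g.
Hypothesis Hpg : p * g < 1.

Definition tail_excess (r : nat) : R := p ^ (S r) * g ^ (r - 1) * (g - 1) / (1 - p * g).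

(* The untruncated tail [sum_(k >= j) (1-p) p^k g^(max r k - 1)], in closed form. *)
Definition reach_moment_tail (r j : nat) : R :=
  if le_dec j r then p ^ j * g ^ (r - 1) + tail_excess r
  else (1 - p) * p ^ j * g ^ (j - 1) / (1 - p * g).

Lemma tail_excess_nonneg r : 0 <= tail_excess r.
Proof.
  unfold tail_excess. apply Rmult_le_pos; [repeat apply Rmult_le_pos|]; try lra;
    try (apply pow_le; lra). left; apply Rinv_0_lt_compat; lra.
Qed.

(* Truncating at [N] lumps the tail onto one atom, which only decreases the sum as [g >= 1]. *)
Lemma geomE_reach_moment_le r : forall m j, (1 <= r \/ r < j)%nat ->
  geomE p (fun k => g ^ (Nat.max r k - 1)) j m <= reach_moment_tail r j.
Proof.
  assert (Hinv : 0 < / (1 - p * g)) by (apply Rinv_0_lt_compat; lra).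
  assert (Hpj : forall j, 0 < p ^ j) by (intro; apply pow_lt; lra).
  assert (Hgj : forall j, 0 < g ^ j) by (intro; apply pow_lt; lra).
  induction m; intros j Hrj; simpl geomE; unfold reach_moment_tail.
  - destruct (le_dec j r).
    + replace (Nat.max r j - 1)%nat with (r - 1)%nat by lia. pose proof (tail_excess_nonneg r). lra.
    + replace (Nat.max r j - 1)%nat with (j - 1)%nat by lia.
      pose proof (Hpj j); pose proof (Hgj (j-1)%nat).
      replace ((1 - p) * p ^ j * g ^ (j - 1) / (1 - p * g)) with
        (p ^ j * g ^ (j - 1) + p ^ j * g ^ (j - 1) * p * (g - 1) * / (1 - p * g)) by (field; lra).
      assert (0 <= p ^ j * g ^ (j - 1) * p * (g - 1) * / (1 - p * g))
        by (repeat apply Rmult_le_pos; lra).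
      lra.
  - specialize (IHm (S j) ltac:(lia)). unfold reach_moment_tail in IHm.
    destruct (le_dec j r) as [Hj|Hj].
    + replace (Nat.max r j - 1)%nat with (r - 1)%nat by lia.
      destruct (le_dec (S j) r) as [Hj'|Hj'].
      * simpl in IHm. nra.
      * assert (j = r) by lia. subst j.
        replace (S r - 1)%nat with r in IHm by lia.
        assert (E : (1 - p) * p ^ S r * g ^ r / (1 - p * g) = p ^ S r * g ^ (r - 1) + tail_excess r).
        { unfold tail_excess. destruct r; [lia|].
          replace (S r - 1)%nat with r by lia. simpl. field. lra. }
        rewrite E in IHm. simpl in IHm |- *. nra.
    + destruct (le_dec (S j) r) as [|_]; [lia|].
      replace (Nat.max r j - 1)%nat with (j - 1)%nat by lia.
      replace (S j - 1)%nat with j in IHm by lia.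
      destruct j; [lia|]. replace (S j - 1)%nat with j by lia.
      apply Rle_trans with ((1 - p) * p ^ S j * g ^ j + (1 - p) * p ^ S (S j) * g ^ S j / (1 - p * g)).
      * simpl in IHm |- *. lra.
      * right. simpl. field. lra.
Qed.

Hypothesis Hc : c = p ^ 2 * g / (1 - p * g).
Hypothesis Hc1 : c < 1.
Hypothesis Hr0 : (1 - p) * p / (1 - p * g) - c * p <= (1 - c) / g.
Hypothesis HN : (1 <= N)%nat.

(* [h r = g^r - c] is a positive supermartingale-type potential: one generation of the
   reach recursion shrinks its expectation by the factor [g]. *)
Lemma potential_step_le r :
  geomE p (fun k => if le_dec 1 (Nat.max r k) then g ^ (Nat.max r k - 1) - c else 0) 0 N
  <= (g ^ r - c) / g.
Proof.
  destruct r as [|r].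
  - destruct N as [|N']; [lia|]. simpl geomE.
    rewrite (geomE_ext_from _ _ (fun k => 1 * g ^ (Nat.max 0 k - 1) + (- c) * 1)).
    + rewrite geomE_lin, geomE_const. pose proof (geomE_reach_moment_le 0 N' 1 ltac:(lia)) as HB.
      unfold reach_moment_tail in HB. destruct (le_dec 1 0); [lia|]. simpl in HB |- *.
      destruct (le_dec 1 0); [lia|]. lra.
    + intros k Hk. destruct (le_dec 1 k); [simpl; ring|lia].
  - rewrite (geomE_ext _ _ (fun k => 1 * g ^ (Nat.max (S r) k - 1) + (- c) * 1))
      by (intro k; destruct (le_dec 1 (Nat.max (S r) k)); [ring|lia]).
    rewrite geomE_lin, geomE_const. pose proof (geomE_reach_moment_le (S r) N 0 ltac:(lia)) as HB.
    unfold reach_moment_tail, tail_excess in HB. destruct (le_dec 0 (S r)); [|lia].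
    replace (S r - 1)%nat with r in HB by lia.
    assert (Hpr : p ^ r * g ^ r <= 1)
      by (rewrite <- Rpow_mult_distr; apply pow_le1; split; [apply Rmult_le_pos|]; lra).
    assert (Key : p ^ S (S r) * g ^ r * (g - 1) / (1 - p * g) <= c - c / g).
    { assert (E1 : c - c / g = p * p * (g - 1) / (1 - p * g)) by (rewrite Hc; field; lra).
      rewrite E1.
      replace (p ^ S (S r) * g ^ r * (g - 1) / (1 - p * g)) with
        ((p ^ r * g ^ r) * (p * p * (g - 1) / (1 - p * g))) by (simpl; field; lra).
      assert (0 <= p * p * (g - 1) / (1 - p * g)).
      { unfold Rdiv. repeat apply Rmult_le_pos; try lra. left; apply Rinv_0_lt_compat; lra. }
      nra. }
    simpl pow in HB |- *.
    replace ((g * g ^ r - c) / g) with (g ^ r - c / g) by (field; lra).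
    simpl in Key. lra.
Qed.

Lemma branch_step_le_potential (b : nat) (f : nat -> R) (A : R) r :
  (forall r, 0 <= f r <= 1) -> 0 <= A -> (forall r, f r <= A * (g ^ r - c)) ->
  branch_step p N b f r <= INR b * A * ((g ^ r - c) / g).
Proof.
  intros Hf HA Hb. unfold branch_step.
  apply Rle_trans with (geomE p (fun k => (INR b * A) *
    (if le_dec 1 (Nat.max r k) then g ^ (Nat.max r k - 1) - c else 0) + 0 * 0) 0 N).
  - apply geomE_mono; auto. intro k. destruct (le_dec 1 (Nat.max r k)); [|nra].
    pose proof (Bernoulli_lower (f (Nat.max r k - 1)%nat) b (Hf _)).
    pose proof (Hb (Nat.max r k - 1)%nat). pose proof (pos_INR b). nra.
  - rewrite geomE_lin, geomE_const. pose proof (potential_step_le r). pose proof (pos_INR b).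
    assert (0 <= INR b * A) by (apply Rmult_le_pos; auto). nra.
Qed.

Variable d : nat.

Lemma survival_le_potential m : forall r,
  survival p N d m r <= (INR d / g) ^ m / (1 - c) * (g ^ r - c).
Proof.
  assert (Hgr : forall r, 1 - c <= g ^ r - c) by (intro r; pose proof (pow_R1_Rle g r Hg); lra).
  induction m; intros r.
  - rewrite survival_0. simpl. specialize (Hgr r).
    replace (1 / (1 - c) * (g ^ r - c)) with ((g ^ r - c) / (1 - c)) by (field; lra).
    apply Rmult_le_reg_r with (1 - c); [lra|].
    unfold Rdiv. rewrite Rmult_assoc, Rinv_l by lra. lra.
  - rewrite survival_S.
    assert (HA : 0 <= (INR d / g) ^ m / (1 - c)).
    { unfold Rdiv. apply Rmult_le_pos; [apply pow_le, Rmult_le_pos; [apply pos_INR|]|];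
        left; apply Rinv_0_lt_compat; lra. }
    eapply Rle_trans;
      [apply branch_step_le_potential; [apply survival_range; auto|apply HA|apply IHm]|].
    right. simpl. field. split; lra.
Qed.

Lemma branch_step_root_le n :
  branch_step p N (S d) (survival p N d n) 0 <= INR (S d) / g * (INR d / g) ^ n.
Proof.
  assert (HA : 0 <= (INR d / g) ^ n / (1 - c)).
  { unfold Rdiv. apply Rmult_le_pos; [apply pow_le, Rmult_le_pos; [apply pos_INR|]|];
      left; apply Rinv_0_lt_compat; lra. }
  eapply Rle_trans.
  - apply branch_step_le_potential; [intro; apply survival_range; auto|exact HA|].
    apply survival_le_potential.
  - right. simpl. field. split; lra.
Qed.

End SubcriticalBound.

Lemma one_minus_pow_ge a s n : 0 <= a <= 1 -> INR n * a <= s ->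
  (1 - s) * (INR n * a) <= 1 - (1 - a) ^ n.
Proof.
  intros Ha Hs. pose proof (Bernoulli_upper a n Ha). pose proof (pos_INR n).
  assert (0 <= INR n * a) by (apply Rmult_le_pos; lra).
  assert (0 <= (s - INR n * a) * (INR n * a)) by (apply Rmult_le_pos; lra).
  replace (INR n ^ 2 * a ^ 2) with ((INR n * a) * (INR n * a)) in * by ring.
  nra.
Qed.

Section Profile.
Variable d : nat.
Variable p : R.
Hypothesis Hp : 0 < p < 1.

(* [geomS f j n] is [geomE f j n] without its tail atom. *)
Fixpoint geomS (f : nat -> R) (j n : nat) : R :=
  match n with O => 0 | S n' => (1 - p) * p ^ j * f j + geomS f (S j) n' end.

Lemma geomS_shift f n : forall j, geomS f (S j) n = p * geomS (fun k => f (S k)) j n.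
Proof. induction n; intros j; simpl; [ring|]. rewrite IHn. ring. Qed.

Lemma geomS_lin f g a c n : forall j,
  geomS (fun k => a * f k + c * g k) j n = a * geomS f j n + c * geomS g j n.
Proof. induction n; intros j; simpl; [ring|]. rewrite IHn. ring. Qed.

Lemma geomS_const n : forall j, geomS (fun _ => 1) j n = p ^ j * (1 - p ^ n).
Proof. induction n; intros j; simpl; [ring|]. rewrite IHn. simpl. ring. Qed.

Lemma geomS_mono f g n : forall j, (forall k, f k <= g k) -> geomS f j n <= geomS g j n.
Proof.
  induction n; intros j H; simpl; [lra|]. apply Rplus_le_compat; auto.
  apply Rmult_le_compat_l; auto. apply Rmult_le_pos; [lra|apply pow_le; lra].
Qed.

Lemma geomS_ext f g n : forall j, (forall k, (j <= k < j + n)%nat -> f k = g k) ->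
  geomS f j n = geomS g j n.
Proof.
  induction n; intros j H; simpl; auto. rewrite H by lia.
  rewrite (IHn (S j)); auto. intros; apply H; lia.
Qed.

Lemma geomS_le_geomE N f n : (forall k, 0 <= f k) -> (n <= N)%nat ->
  geomS f 0 n <= geomE p f 0 N.
Proof.
  intros Hf. generalize 0%nat as j. revert n. induction N; intros n j Hn.
  - destruct n; [|lia]. simpl. apply Rmult_le_pos; [apply pow_le; lra|auto].
  - destruct n; [change (0 <= geomE p f j (S N)); apply geomE_nonneg; auto|].
    simpl. apply Rplus_le_compat_l. apply IHN. lia.
Qed.

Definition lin_rate : R := INR d * (1 - p).

(* [profile] solves the affine part [b (r+1) = p + d (1-p) b r] of the linearised
   recursion; its mass below is what the linearisation gains from fresh radii. *)
Fixpoint profile (r : nat) : R := match r with O => p | S r' => p + lin_rate * profile r' end.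

Definition profile_mass (K : nat) : R := geomS profile 0 (S K).

Lemma lin_rate_nonneg : 0 <= lin_rate.
Proof. unfold lin_rate. apply Rmult_le_pos; [apply pos_INR|lra]. Qed.

Lemma profile_ge_p r : p <= profile r.
Proof. induction r; simpl; [lra|]. pose proof lin_rate_nonneg. nra. Qed.

Lemma profile_mono r s : (r <= s)%nat -> profile r <= profile s.
Proof.
  assert (Hstep : forall q, profile q <= profile (S q)).
  { pose proof lin_rate_nonneg. intro q. induction q; simpl; [nra|]. simpl in IHq. nra. }
  intros H; induction H; [lra|]. pose proof (Hstep m). lra.
Qed.

Definition mass_ratio : R := p * lin_rate.

Lemma mass_ratio_nonneg : 0 <= mass_ratio.
Proof. unfold mass_ratio. pose proof lin_rate_nonneg. nra. Qed.

Lemma profile_mass_S K :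
  profile_mass (S K) = p * (1 - p ^ (S (S K))) + mass_ratio * profile_mass K.
Proof.
  unfold profile_mass.
  change (geomS profile 0 (S (S K))) with ((1 - p) * p ^ 0 * profile 0 + geomS profile 1 (S K)).
  rewrite geomS_shift. simpl profile at 1.
  rewrite (geomS_ext _ (fun k => p * 1 + lin_rate * profile k)) by (intros; simpl; ring).
  rewrite geomS_lin, geomS_const. unfold mass_ratio. simpl. ring.
Qed.

Fixpoint geom_sum (J : nat) : R :=
  match J with O => 1 | S J' => 1 + mass_ratio * geom_sum J' end.

Lemma geom_sum_pos J : 0 < geom_sum J.
Proof. induction J; simpl; [lra|]. pose proof mass_ratio_nonneg. nra. Qed.

Lemma profile_mass_lower J : forall K, (J <= K)%nat ->
  p * (1 - p ^ (S K - J)) * geom_sum J <= profile_mass K.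
Proof.
  induction J; intros K HK.
  - simpl geom_sum. replace (S K - 0)%nat with (S K) by lia. unfold profile_mass.
    assert (E : geomS (fun _ => p * 1 + 0 * 1) 0 (S K) = p * (1 - p ^ S K))
      by (rewrite geomS_lin, geomS_const; simpl; ring).
    rewrite Rmult_1_r, <- E. apply geomS_mono. intro k; pose proof (profile_ge_p k); lra.
  - destruct K as [|K']; [lia|]. rewrite profile_mass_S. specialize (IHJ K' ltac:(lia)).
    replace (S (S K') - S J)%nat with (S K' - J)%nat by lia. simpl geom_sum.
    pose proof mass_ratio_nonneg. pose proof (geom_sum_pos J).
    assert (p ^ S (S K') <= p ^ (S K' - J)) by (apply pow_decr; [lra|lia]).
    assert (p ^ (S K' - J) <= 1) by (apply pow_le1; lra).
    nra.
Qed.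

Hypothesis Hd : (1 <= d)%nat.
Hypothesis Hcond : INR d * p ^ 2 - 2 * INR d * p + 1 < 0.

(* The limit of [d * profile_mass K] is [d p / (1 - p d (1-p))] (or infinite), and it
   exceeds 1 exactly under [Hcond]. *)
Lemma exists_geom_sum_large : exists J, 1 < INR d * p * geom_sum J.
Proof.
  destruct (Rle_lt_dec 1 mass_ratio) as [Hz|Hz].
  - exists 0%nat. simpl. unfold mass_ratio, lin_rate in Hz. nra.
  - assert (HZ : forall J, geom_sum J * (1 - mass_ratio) = 1 - mass_ratio ^ (S J)).
    { induction J; simpl; [ring|]. simpl in IHJ. nra. }
    assert (Hpos : 0 < INR d * p) by (apply Rmult_lt_0_compat; [apply lt_0_INR; lia|lra]).
    assert (Hgap : 0 < (INR d * p + mass_ratio - 1) / (INR d * p)).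
    { apply Rdiv_lt_0_compat; auto. unfold mass_ratio, lin_rate. nra. }
    pose proof mass_ratio_nonneg.
    destruct (pow_lt_1_zero mass_ratio ltac:(rewrite Rabs_right; lra) _ Hgap) as [J HJ].
    exists J. specialize (HJ (S J) ltac:(lia)).
    rewrite Rabs_right in HJ by (apply Rle_ge, pow_le; lra).
    assert (E : geom_sum J = (1 - mass_ratio ^ S J) / (1 - mass_ratio))
      by (rewrite <- (HZ J); field; lra).
    rewrite E. apply Rmult_lt_reg_r with (1 - mass_ratio); [lra|].
    replace (INR d * p * ((1 - mass_ratio ^ S J) / (1 - mass_ratio)) * (1 - mass_ratio))
      with (INR d * p * (1 - mass_ratio ^ S J)) by (field; lra).
    apply Rmult_lt_compat_l with (r := INR d * p) in HJ; auto.
    unfold Rdiv in HJ. rewrite <- Rmult_assoc, Rinv_r_simpl_m in HJ by lra. lra.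
Qed.

Lemma exists_profile_mass_large : exists K, 1 < INR d * profile_mass K.
Proof.
  destruct exists_geom_sum_large as [J HJ].
  set (A := INR d * p * geom_sum J).
  assert (Hgap : 0 < (A - 1) / A) by (apply Rdiv_lt_0_compat; unfold A in *; lra).
  destruct (pow_lt_1_zero p ltac:(rewrite Rabs_right; lra) _ Hgap) as [L HL].
  exists (J + L)%nat. specialize (HL (S L) ltac:(lia)).
  rewrite Rabs_right in HL by (apply Rle_ge, pow_le; lra).
  pose proof (profile_mass_lower J (J + L) ltac:(lia)) as HY.
  replace (S (J + L) - J)%nat with (S L) in HY by lia.
  assert (A * p ^ S L < A - 1).
  { apply Rmult_lt_compat_l with (r := A) in HL; [|unfold A in *; lra].
    unfold Rdiv in HL. rewrite <- Rmult_assoc, Rinv_r_simpl_m in HL by (unfold A in *; lra). lra. }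
  assert (0 <= INR d) by apply pos_INR.
  unfold A in *. nra.
Qed.

End Profile.

Section SupercriticalBound.
Variable d : nat.
Variable p : R.
Variable K : nat.
Hypothesis Hp : 0 < p < 1.
Hypothesis Hd : (1 <= d)%nat.
Hypothesis HY : 1 < INR d * profile_mass d p K.

Notation profile := (profile d p).

Definition capped_profile (r : nat) : R := profile (Nat.min r K).
Definition profile_cap : R := profile K.
Definition gain : R := INR d * p * profile_mass d p K.
Definition margin : R := (gain - p) / profile_cap.
Definition scale : R := margin / (INR d * profile_cap * (1 + margin)).
Definition subsolution (r : nat) : R := scale * capped_profile r.

Lemma INR_d_pos : 0 < INR d.
Proof. apply lt_0_INR; lia. Qed.

Lemma profile_cap_ge_p : p <= profile_cap.
Proof. apply profile_ge_p; auto. Qed.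

Lemma capped_profile_range r : p <= capped_profile r <= profile_cap.
Proof.
  unfold capped_profile, profile_cap. split; [apply profile_ge_p; auto|apply profile_mono; auto; lia].
Qed.

Lemma capped_profile_mono r s : (r <= s)%nat -> capped_profile r <= capped_profile s.
Proof. intros; unfold capped_profile; apply profile_mono; auto; lia. Qed.

Lemma capped_profile_S_le r : capped_profile (S r) <= p + lin_rate d p * capped_profile r.
Proof.
  unfold capped_profile. destruct (le_dec (S r) K).
  - replace (Nat.min (S r) K) with (S r) by lia. replace (Nat.min r K) with r by lia. simpl. lra.
  - replace (Nat.min (S r) K) with K by lia. replace (Nat.min r K) with K by lia.
    pose proof (profile_mono d p Hp K (S K) ltac:(lia)). simpl in *. lra.
Qed.

Lemma gain_gt_p : p < gain.
Proof. unfold gain. nra. Qed.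

Lemma margin_pos : 0 < margin.
Proof.
  unfold margin. pose proof gain_gt_p. pose proof profile_cap_ge_p. apply Rdiv_lt_0_compat; lra.
Qed.

Lemma margin_le x : 0 <= x <= profile_cap -> margin * x <= gain - p.
Proof.
  intros Hx. pose proof gain_gt_p. pose proof profile_cap_ge_p.
  apply Rle_trans with ((gain - p) / profile_cap * profile_cap).
  - apply Rmult_le_compat_l; [|lra]. left. apply margin_pos.
  - right; field; lra.
Qed.

Lemma scale_pos : 0 < scale.
Proof.
  unfold scale. pose proof margin_pos. pose proof profile_cap_ge_p. pose proof INR_d_pos.
  apply Rdiv_lt_0_compat; auto. apply Rmult_lt_0_compat; [apply Rmult_lt_0_compat|]; lra.
Qed.

Lemma scale_cap : INR d * scale * profile_cap = margin / (1 + margin).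
Proof.
  unfold scale. pose proof margin_pos. pose proof profile_cap_ge_p. pose proof INR_d_pos.
  field. repeat split; lra.
Qed.

Lemma subsolution_range r : 0 <= subsolution r /\ INR d * subsolution r <= margin / (1 + margin).
Proof.
  rewrite <- scale_cap. unfold subsolution. pose proof (capped_profile_range r).
  pose proof scale_pos. pose proof INR_d_pos. split; [nra|].
  rewrite Rmult_assoc. apply Rmult_le_compat_l; [lra|]. apply Rmult_le_compat_l; lra.
Qed.

Lemma subsolution_le1 r : 0 <= subsolution r <= 1.
Proof.
  pose proof (subsolution_range r). pose proof margin_pos.
  assert (1 <= INR d) by (replace 1 with (INR 1) by auto; apply le_INR; lia).
  assert (margin / (1 + margin) <= 1).
  { apply Rmult_le_reg_r with (1 + margin); [lra|].
    unfold Rdiv. rewrite Rmult_assoc, Rinv_l; lra. }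
  nra.
Qed.

Variable N : nat.
Hypothesis HNK : (K + 2 <= N)%nat.

Definition fresh_term (k : nat) : R := if le_dec 1 k then capped_profile (k - 1) else 0.

Lemma gain_le : gain <= INR d * geomE p fresh_term 0 N.
Proof.
  unfold gain. rewrite Rmult_assoc. apply Rmult_le_compat_l; [left; apply INR_d_pos|].
  assert (H1 : geomS p fresh_term 0 (S (S K)) <= geomE p fresh_term 0 N) by
    (apply geomS_le_geomE; auto; [|lia]; intro k; unfold fresh_term; destruct (le_dec 1 k);
     [pose proof (capped_profile_range (k-1)); lra|lra]).
  enough (H2 : geomS p fresh_term 0 (S (S K)) = p * profile_mass d p K) by lra.
  change (geomS p fresh_term 0 (S (S K)))
    with ((1 - p) * p ^ 0 * fresh_term 0 + geomS p fresh_term 1 (S K)).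
  unfold fresh_term at 1. destruct (le_dec 1 0); [lia|].
  rewrite geomS_shift. unfold profile_mass. rewrite Rmult_0_r, Rplus_0_l. f_equal.
  apply geomS_ext. intros k Hk. unfold fresh_term. destruct (le_dec 1 (S k)); [|lia].
  unfold capped_profile. f_equal. lia.
Qed.

Definition lin_term (r k : nat) : R :=
  if le_dec 1 (Nat.max r k) then capped_profile (Nat.max r k - 1) else 0.

(* The radius drawn at the current vertex is either [0], keeping the inherited reach, or
   at least [1], when the reach is at least the fresh one. *)
Lemma lin_term_split r :
  (1 - p) * (if le_dec 1 r then capped_profile (r - 1) else 0) + geomE p fresh_term 0 N
  <= geomE p (lin_term r) 0 N.
Proof.
  set (L0 := fun k : nat => if Nat.eq_dec k 0
                            then (if le_dec 1 r then capped_profile (r - 1) else 0) else 0).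
  assert (HL0 : geomE p L0 0 N = (1 - p) * (if le_dec 1 r then capped_profile (r - 1) else 0)).
  { destruct N as [|N']; [lia|]. simpl. unfold L0 at 1. simpl.
    rewrite (geomE_ext_from p _ (fun _ => 0)); [rewrite geomE_const; ring|].
    intros k Hk. unfold L0. destruct (Nat.eq_dec k 0); [lia|auto]. }
  rewrite <- HL0, <- (Rmult_1_l (geomE p L0 0 N)), <- (Rmult_1_l (geomE p fresh_term 0 N)),
    <- geomE_lin.
  apply geomE_mono; auto. intro k. unfold L0, fresh_term, lin_term. destruct (Nat.eq_dec k 0).
  - subst. replace (Nat.max r 0) with r by lia. destruct (le_dec 1 0); [lia|].
    destruct (le_dec 1 r); lra.
  - destruct (le_dec 1 k); [|lia]. destruct (le_dec 1 (Nat.max r k)); [|lia].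
    pose proof (capped_profile_mono (k - 1) (Nat.max r k - 1) ltac:(lia)). lra.
Qed.

Lemma capped_profile_growth r : (1 + margin) * capped_profile r <= INR d * geomE p (lin_term r) 0 N.
Proof.
  pose proof gain_le. pose proof margin_pos. pose proof profile_cap_ge_p. pose proof INR_d_pos.
  pose proof (lin_term_split r) as Hsplit.
  apply Rle_trans with (INR d * ((1 - p) * (if le_dec 1 r then capped_profile (r - 1) else 0)
                                 + geomE p fresh_term 0 N)); [|apply Rmult_le_compat_l; lra].
  destruct r as [|r].
  - destruct (le_dec 1 0); [lia|]. unfold capped_profile. simpl profile.
    pose proof (margin_le p ltac:(lra)). nra.
  - destruct (le_dec 1 (S r)); [|lia]. replace (S r - 1)%nat with r by lia.
    pose proof (capped_profile_S_le r) as Hb.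
    pose proof (margin_le (capped_profile (S r)) ltac:(pose proof (capped_profile_range (S r)); lra)).
    unfold lin_rate in Hb. nra.
Qed.

(* The quadratic loss in [1 - (1-a)^d >= d a - (d a)^2] is absorbed by the growth margin. *)
Lemma subsolution_le_branch_step r : subsolution r <= branch_step p N d subsolution r.
Proof.
  pose proof scale_pos. pose proof margin_pos. pose proof INR_d_pos.
  set (s := margin / (1 + margin)).
  unfold branch_step.
  apply Rle_trans with (geomE p (fun k => ((1 - s) * INR d * scale) * lin_term r k + 0 * 0) 0 N).
  - rewrite geomE_lin, geomE_const. pose proof (capped_profile_growth r).
    replace (1 - s) with (1 / (1 + margin)) by (unfold s; field; lra).
    unfold subsolution.
    apply Rle_trans with (scale * (1 / (1 + margin)) * ((1 + margin) * capped_profile r));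
      [right; field; lra|].
    assert (0 <= scale * (1 / (1 + margin))).
    { apply Rmult_le_pos; [lra|]. unfold Rdiv. rewrite Rmult_1_l. left; apply Rinv_0_lt_compat; lra. }
    nra.
  - apply geomE_mono; auto. intro k. unfold lin_term.
    destruct (le_dec 1 (Nat.max r k)); [|lra].
    pose proof (subsolution_range (Nat.max r k - 1)) as [_ Hs].
    pose proof (one_minus_pow_ge _ s d (subsolution_le1 (Nat.max r k - 1)) Hs).
    unfold subsolution in *. lra.
Qed.

Lemma subsolution_le_survival m : forall r, subsolution r <= survival p N d m r.
Proof.
  induction m; intros r.
  - rewrite survival_0. apply subsolution_le1.
  - rewrite survival_S. eapply Rle_trans; [apply subsolution_le_branch_step|].
    apply branch_step_mono; auto; [intro r'; split; [apply subsolution_le1|auto]|].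
    intro; apply survival_range; auto.
Qed.

Lemma branch_step_root_ge n : scale * p <= branch_step p N (S d) (survival p N d n) 0.
Proof.
  apply Rle_trans with (subsolution 0); [unfold subsolution, capped_profile; simpl; lra|].
  eapply Rle_trans; [apply subsolution_le_branch_step|].
  eapply Rle_trans; [apply branch_step_S; auto; apply subsolution_le1|].
  apply branch_step_mono; auto.
  - intro r'. split; [apply subsolution_le1|apply subsolution_le_survival].
  - intro; apply survival_range; auto.
Qed.

End SupercriticalBound.

(* With [y = p g] slightly above [1/2], the potential constant [c = p y / (1 - y)] stays
   below [1] and [d / g = d p / y < 1]; the room comes from [p <= 1/4]. *)
Lemma subcritical_parameters d p : (2 <= d)%nat -> 0 < p < 1 -> 2 * p * INR d <= 1 ->
  exists g, 1 <= g /\ p * g < 1 /\ p ^ 2 * g / (1 - p * g) < 1 /\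
    (1 - p) * p / (1 - p * g) - p ^ 2 * g / (1 - p * g) * p <= (1 - p ^ 2 * g / (1 - p * g)) / g /\
    0 <= INR d / g < 1.
Proof.
  intros Hd Hp Hcond.
  assert (Hd2 : 2 <= INR d) by (replace 2 with (INR 2) by (simpl; ring); apply le_INR; auto).
  assert (Hp4 : p <= / 4) by nra.
  set (y := / 2 + p / 8). assert (Hy : / 2 < y < 1) by (unfold y; lra).
  exists (y / p).
  replace (p * (y / p)) with y by (field; lra).
  replace (p ^ 2 * (y / p) / (1 - y)) with (p * y / (1 - y)) by (field; lra).
  repeat split.
  - apply Rmult_le_reg_r with p; [lra|].
    unfold Rdiv. rewrite Rmult_assoc, Rinv_l by lra. unfold y; lra.
  - lra.
  - apply Rmult_lt_reg_r with (1 - y); [lra|].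
    unfold Rdiv. rewrite Rmult_assoc, Rinv_l by lra. unfold y in *. nra.
  - assert (E : (1 - p * y / (1 - y)) / (y / p) - ((1 - p) * p / (1 - y) - p * y / (1 - y) * p) =
                p * (1 - 2 * y + p * y ^ 2) / (y * (1 - y))) by (field; repeat split; lra).
    assert (0 <= p * (1 - 2 * y + p * y ^ 2) / (y * (1 - y))).
    { unfold Rdiv. apply Rmult_le_pos; [apply Rmult_le_pos; [lra|unfold y; nra]|].
      left; apply Rinv_0_lt_compat; nra. }
    lra.
  - unfold Rdiv. apply Rmult_le_pos; [apply pos_INR|]. left; apply Rinv_0_lt_compat.
    apply Rdiv_lt_0_compat; lra.
  - replace (INR d / (y / p)) with (INR d * p / y) by (field; lra).
    apply Rmult_lt_reg_r with y; [lra|]. unfold Rdiv. rewrite Rmult_assoc, Rinv_l by lra. lra.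
Qed.

Section Percolation.
Variable d : nat.
Variable p : R.
Variable Sp : ProbSpace.
Variable Rad : list nat -> Omega Sp -> nat.
Hypothesis Hd : (2 <= d)%nat.
Hypothesis Hp : 0 < p < 1.
Hypothesis Hiid : iid_geometric Sp d p Rad.

Notation covered_at := (covered_at_depth d (Omega Sp) Rad).

Lemma meas_covered_at n : meas Sp (covered_at n).
Proof. apply (meas_covered_at_depth Sp d p Rad n); auto. Qed.

Lemma Pr_V_event_eq : Pr Sp (V_event d (Omega Sp) Rad) = Pr Sp (fun w => forall n, covered_at n w).
Proof. apply Pr_ext. intro w. apply V_event_iff. Qed.

Lemma Pr_covered_at_S n N : (S n <= N)%nat ->
  Pr Sp (covered_at (S n)) = branch_step p N (S d) (survival p N d n) 0.
Proof. apply Pr_covered_at_depth; auto. Qed.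

Lemma Pr_V_event_pos : INR d * p ^ 2 - 2 * INR d * p + 1 < 0 -> Pr Sp (V_event d (Omega Sp) Rad) > 0.
Proof.
  intros Hcond.
  destruct (exists_profile_mass_large d p Hp ltac:(lia) Hcond) as [K HK].
  assert (Ha : 0 < scale d p K * p) by (apply Rmult_lt_0_compat; [apply scale_pos; auto; lia|lra]).
  assert (HS : forall n, scale d p K * p <= Pr Sp (covered_at (S n))).
  { intro n. rewrite (Pr_covered_at_S n (n + K + 2)) by lia.
    apply branch_step_root_ge; auto; lia. }
  rewrite Pr_V_event_eq. apply Rlt_le_trans with (scale d p K * p); auto.
  apply Pr_inter_decr_ge; [apply meas_covered_at|apply covered_at_depth_pred|].
  intro n. eapply Rle_trans; [apply (HS n)|].
  apply Pr_mono; [apply meas_covered_at|apply meas_covered_at|apply covered_at_depth_pred].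
Qed.

Lemma Pr_V_event_zero : 2 * p * INR d <= 1 -> Pr Sp (V_event d (Omega Sp) Rad) = 0.
Proof.
  intros Hcond.
  destruct (subcritical_parameters d p Hd Hp Hcond) as [g [Hg [Hpg [Hc1 [Hr0 Hq]]]]].
  rewrite Pr_V_event_eq.
  apply Rle_antisym; [|apply Pr_nonneg, meas_all, meas_covered_at].
  apply (le0_of_le_geometric _ (INR (S d) / g) (INR d / g) Hq). intro n.
  apply Rle_trans with (Pr Sp (covered_at (S n))).
  - apply Pr_mono; [apply meas_all, meas_covered_at|apply meas_covered_at|auto].
  - rewrite (Pr_covered_at_S n (S n)) by lia.
    apply (branch_step_root_le p (S n) g _ Hp Hg Hpg eq_refl Hc1 Hr0 ltac:(lia)).
Qed.

End Percolation.

Theorem mainTheorem8 (d : nat) (p : R) (S : ProbSpace)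
    (Rad : list nat -> Omega S -> nat) :
  (2 <= d)%nat -> 0 < p < 1 -> iid_geometric S d p Rad ->
  (INR d * p ^ 2 - 2 * INR d * p + 1 < 0 -> Pr S (V_event d (Omega S) Rad) > 0) /\
  (2 * p * INR d <= 1 -> Pr S (V_event d (Omega S) Rad) = 0).
Proof.
  intros Hd Hp Hiid. split.
  - apply Pr_V_event_pos; auto.
  - apply Pr_V_event_zero; auto.
Qed.
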